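(* Let $h,k$ be positive integers with $\gcd(h,k)=1$ and $h+k$ odd. Then $$(k-1)B_{1}(h,k)+(h-1)B_{1}(k,h)=-\frac{1}{2}(k-1)(h-1).$$
   Context: $[x]$ denotes the greatest integer $\le x$. For integers $a,b$ with $b>0$ and $\gcd(a,b)=1$, define $$B_{1}(a,b)=\sum_{j=1}^{b-1}(-1)^{j+\left[\frac{aj}{b}\right]}\left[\frac{aj}{b}\right].$$ *)

From mathcomp Require Import all_boot all_order all_algebra.
Import GRing.Theory Num.Theory.
Local Open Scope ring_scope.

(* Floor of a*j/b for b > 0 is the Euclidean quotient (a*j %/ b)%Z. *)
Definition floor_div (a b : int) (j : nat) : int := ((a * j%:Z) %/ b)%Z.

Definition B1 (a b : int) : int :=
  \sum_(1 <= j < absz b) ((-1) ^ (j%:Z + floor_div a b j)) * floor_div a b j.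

From mathcomp Require Import all_boot all_order all_algebra.
From mathcomp Require Import zify ring.
Import GRing.Theory Num.Theory.

(* Since j + [hj/k] = [j(h+k)/k], for coprime h, k the Beatty-type sequences
   j + [hj/k] (0 <= j < k) and i + [ki/h] (0 < i < h) partition {0, ..., h+k-2},
   a set of even size when h+k is odd, so their signs (-1)^n sum to 0.  On the
   other hand j -> k-j turns [hj/k] into h-1-[hj/k] without changing the sign,
   so 2 B_1(h,k) = (h-1) * (sum of the signs of the first sequence over 0 < j < k).
   Adding the two instances, weighted by k-1 and h-1, gives the identity. *)

Definition beatty (h k j : nat) : nat := j + h * j %/ k.

Lemma coprime_modn_gt0 {h k j} : coprime h k -> 0 < j < k -> 0 < h * j %% k.
Proof.
move=> co /andP[j_gt0 j_lt_k]; rewrite lt0n; apply/negP => /eqP hj_mod.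
have : k %| h * j by rewrite /dvdn hj_mod.
rewrite Gauss_dvdr 1?coprime_sym //.
by move/(dvdn_leq j_gt0); rewrite leqNgt j_lt_k.
Qed.

Lemma beatty_lt h k j : 0 < h -> j < k -> beatty h k j < h + k - 1.
Proof.
move=> h_gt0 j_lt_k; rewrite /beatty.
have : h * j %/ k < h by rewrite ltn_divLR; [rewrite ltn_mul2l; lia | lia].
lia.
Qed.

Lemma beatty_homo h k : {homo beatty h k : j j' / j < j'}.
Proof.
move=> j j' lt_jj'; rewrite /beatty.
have : h * j %/ k <= h * j' %/ k by apply/leq_div2r; rewrite leq_mul2l ltnW ?orbT.
lia.
Qed.

Lemma beatty_inj h k : injective (beatty h k).
Proof. exact/incn_inj/leq_mono/beatty_homo. Qed.

Lemma beatty_neq h k j i : coprime h k -> 0 < j < k -> 0 < i < h ->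
  beatty h k j != beatty k h i.
Proof.
move=> co hj hi; rewrite /beatty.
have r_gt0 := coprime_modn_gt0 co hj.
have s_gt0 : 0 < k * i %% h by rewrite coprime_modn_gt0 // coprime_sym.
have r_lt : h * j %% k < k by rewrite ltn_mod; lia.
have s_lt : k * i %% h < h by rewrite ltn_mod; lia.
move: (divn_eq (h * j) k) (divn_eq (k * i) h) r_gt0 s_gt0 r_lt s_lt.
set q := h * j %/ k; set r := h * j %% k; set p := k * i %/ h; set s := k * i %% h.
move=> hjE kiE r_gt0 s_gt0 r_lt s_lt; apply/eqP => eq_beatty.
(* j + q = i + p forces either p < j and q < i, or j <= p and i <= q:
   both contradict the Euclidean divisions hj = qk + r and ki = ph + s. *)
have [p_lt_j | j_le_p] := ltnP p j.
  have q_lt_i : q < i by lia.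
  have : h * p.+1 <= h * j by rewrite leq_mul2l p_lt_j orbT.
  have : k * q.+1 <= k * i by rewrite leq_mul2l q_lt_i orbT.
  nia.
have i_le_q : i <= q by lia.
have : h * j <= h * p by rewrite leq_mul2l j_le_p orbT.
have : k * i <= k * q by rewrite leq_mul2l i_le_q orbT.
nia.
Qed.

Lemma beatty_perm_eq {h k} : coprime h k -> 0 < h -> 0 < k ->
  perm_eq (map (beatty h k) (iota 0 k) ++ map (beatty k h) (iota 1 (h - 1)))
          (iota 0 (h + k - 1)).
Proof.
move=> co h_gt0 k_gt0.
set s := _ ++ _.
have s_uniq : uniq s.
  rewrite cat_uniq !map_inj_uniq ?iota_uniq ?andbT; try exact: beatty_inj.
  apply/hasPn => x /mapP[i]; rewrite mem_iota subnKC // => hi -> {x}.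
  apply/mapP => -[j]; rewrite mem_iota => hj /eqP; apply/negP.
  have [->|j_gt0] := posnP j.
    rewrite /beatty muln0 div0n addn0 addn_eq0 negb_and -lt0n.
    by case/andP: hi => ->.
  by rewrite eq_sym beatty_neq // j_gt0; case/andP: hj.
have s_sub : {subset s <= iota 0 (h + k - 1)}.
  move=> x; rewrite mem_cat => /orP[] /mapP[j]; rewrite mem_iota => /andP[_ hj] ->;
    rewrite mem_iota add0n; first exact: beatty_lt.
  by rewrite addnC beatty_lt //; lia.
have size_s : size (iota 0 (h + k - 1)) <= size s.
  by rewrite size_cat !size_map !size_iota; lia.
by apply: uniq_perm; rewrite ?iota_uniq //; have [] := uniq_min_size s_uniq s_sub size_s.
Qed.

Lemma divn_mul_sub_add {h k j} : coprime h k -> 0 < h -> 0 < j < k ->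
  h * (k - j) %/ k + h * j %/ k = h - 1.
Proof.
move=> co h_gt0 hj.
have r_gt0 := coprime_modn_gt0 co hj.
have r_lt : h * j %% k < k by rewrite ltn_mod; lia.
have q_lt : h * j %/ k < h by rewrite ltn_divLR; [rewrite ltn_mul2l; lia | lia].
move: (divn_eq (h * j) k) r_gt0 r_lt q_lt.
set q := h * j %/ k; set r := h * j %% k => hjE r_gt0 r_lt q_lt.
have -> : h * (k - j) = (h - 1 - q) * k + (k - r) by rewrite mulnBr !mulnBl hjE mul1n; nia.
by rewrite divnMDl ?divn_small; lia.
Qed.

Local Open Scope ring_scope.

Lemma sum_sign_even n : \sum_(m <- iota 0 n.*2) (-1) ^+ m = 0 :> int.
Proof.
elim: n => [|n IHn]; first by rewrite big_nil.
rewrite doubleS -addn2 iotaD big_cat /= IHn add0r add0n !big_cons big_nil.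
by rewrite exprS mulN1r addr0 subrr.
Qed.

Lemma sum_sign_beatty {h k} : coprime h k -> (0 < h)%N -> (0 < k)%N -> odd (h + k) ->
  1 + \sum_(1 <= j < k) (-1) ^+ beatty h k j
    + \sum_(1 <= i < h) (-1) ^+ beatty k h i = 0 :> int.
Proof.
move=> co h_gt0 k_gt0 odd_hk.
have -> : 1 + \sum_(1 <= j < k) (-1) ^+ beatty h k j
          = \sum_(j <- iota 0 k) (-1) ^+ beatty h k j :> int.
  by rewrite -(prednK k_gt0) [iota _ _]/= big_cons /beatty muln0 div0n /index_iota subn1.
rewrite /index_iota !subn1 -!(big_map (beatty _ _) xpredT (fun n => (-1) ^+ n)).
rewrite -big_cat -subn1 (perm_big _ (beatty_perm_eq co h_gt0 k_gt0)).
have -> : (h + k - 1 = (h + k)./2.*2)%N.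
  by rewrite -{1}(odd_double_half (h + k)) odd_hk add1n subn1.
exact: sum_sign_even.
Qed.

Lemma B1_nat (h k : nat) :
  B1 h k = \sum_(1 <= j < k) (-1) ^+ beatty h k j * (h * j %/ k)%N%:Z.
Proof.
apply: eq_bigr => j _.
by rewrite /floor_div -PoszM divz_nat -PoszD -exprnP.
Qed.

Lemma B1_sum_sign {h k} : coprime h k -> (0 < h)%N -> odd (h + k) ->
  2 * B1 h k = (h%:Z - 1) * \sum_(1 <= j < k) (-1) ^+ beatty h k j.
Proof.
move=> co h_gt0 odd_hk.
rewrite B1_nat mulr2n mulrDl mul1r {2}big_nat_rev -big_split mulr_sumr.
apply: eq_big_nat => j hj.
have hj' : (0 < j < k)%N by lia.
have -> : (1 + k - j.+1 = k - j)%N by lia.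
have sum_even : ~~ odd (beatty h k (k - j) + beatty h k j).
  have -> : (beatty h k (k - j) + beatty h k j = h + k - 1)%N.
    by rewrite /beatty; have := divn_mul_sub_add co h_gt0 hj'; lia.
  by rewrite oddB ?addn_gt0 ?h_gt0 // odd_hk.
have -> : (-1) ^+ beatty h k (k - j) = (-1) ^+ beatty h k j :> int.
  rewrite -signr_odd -[RHS]signr_odd; move: sum_even; rewrite oddD.
  by case: odd; case: odd.
by rewrite /= -mulrDr -PoszD addnC divn_mul_sub_add // subzn // mulrC.
Qed.

Lemma B1_reciprocity_nat h k : coprime h k -> (0 < h)%N -> (0 < k)%N -> odd (h + k) ->
  2 * ((k%:Z - 1) * B1 h k + (h%:Z - 1) * B1 k h) = - ((k%:Z - 1) * (h%:Z - 1)).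
Proof.
move=> co h_gt0 k_gt0 odd_hk.
have hB1 := B1_sum_sign co h_gt0 odd_hk.
have kB1 : 2 * B1 k h = (k%:Z - 1) * \sum_(1 <= i < h) (-1) ^+ beatty k h i.
  by rewrite B1_sum_sign // 1?coprime_sym // addnC.
have sum0 := sum_sign_beatty co h_gt0 k_gt0 odd_hk.
set S1 := \sum_(1 <= j < k) _ in hB1 sum0; set S2 := \sum_(1 <= i < h) _ in kB1 sum0.
transitivity ((k%:Z - 1) * (2 * B1 h k) + (h%:Z - 1) * (2 * B1 k h)); first by ring.
rewrite hB1 kB1 (_ : S2 = (1 + S1 + S2) - 1 - S1); last by ring.
by rewrite sum0; ring.
Qed.

Theorem theorem14 (h k : int) :
  0 < h -> 0 < k -> gcdz h k = 1%N -> odd (absz (h + k)) ->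
  (((k - 1) * B1 h k + (h - 1) * B1 k h)%:~R : rat)
    = - (1 / 2) * ((k - 1) * (h - 1))%:~R.
Proof.
case: h => // h; case: k => // k h_gt0 k_gt0 gcd1 odd_hk.
have co : coprime h k by apply/eqP; case: gcd1.
rewrite -PoszD /= in odd_hk.
apply: (@mulfI _ 2) => //.
rewrite -[2 : rat]/((2 : int)%:~R) -intrM B1_reciprocity_nat // intrN.
by field.
Qed.
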